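(* Let $0<\beta<1$. Then the linear operator $T=\beta+2xD+(x^2-1)D^2$ on $\mathbb{R}[x]$, i.e. $T[f](x)=\beta f(x)+2xf'(x)+(x^2-1)f''(x)$, preserves the reality of zeros: whenever $f\in\mathbb{R}[x]$ has only real zeros, $T[f]$ has only real zeros.
   Context: $D$ denotes differentiation with respect to $x$. *)

From mathcomp Require Import all_boot all_algebra.
From mathcomp Require Import complex.
From mathcomp Require Import reals.
Set Implicit Arguments. Unset Strict Implicit. Unset Printing Implicit Defensive.
Import GRing.Theory Num.Theory.
Local Open Scope ring_scope.

Definition only_real_zeros (R : realType) (f : {poly R}) : Prop :=
  forall z : R[i], root (map_poly (real_complex R) f) z -> complex.Im z = 0.

Definition Top (R : realType) (beta : R) (f : {poly R}) : {poly R} :=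
  beta *: f + (2%:R *: 'X) * f^`() + ('X ^+ 2 - 1) * f^`(2).

(* A polynomial g with no zeros in the open upper half-plane keeps this property
   under g |-> g - t g' whenever Im t < 0: at such a point w the logarithmic
   derivative g'(w)/g(w) = sum 1/(w - rho) over the zeros rho of g has
   nonpositive imaginary part, while a zero of g - t g' would make it equal to 1/t,
   whose imaginary part is positive.  Freezing the coefficients of T at a point c
   of the upper half-plane gives b + 2 c D + (c^2 - 1) D^2 = b (1 - t1 D)(1 - t2 D),
   where t1, t2 are the roots of b t^2 + 2 c t + c^2 - 1; for 0 < b < 1 both lie in
   the lower half-plane.  So T[f](c) <> 0 for real-rooted f, and zeros of T[f] in
   the lower half-plane are excluded by conjugation. *)

From mathcomp Require Import all_boot all_algebra.
From mathcomp Require Import complex.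
From mathcomp Require Import reals.
From mathcomp Require Import ring lra.
Import order.Order.TTheory GRing.Theory Num.Theory.
Local Open Scope ring_scope.

Section UpperStable.
Variable R : rcfType.
Implicit Types (g : {poly R[i]}) (z w t : R[i]).

Lemma Im_inv_lt0 z : 0 < complex.Im z -> complex.Im z^-1 < 0.
Proof.
by case: z => a b /= b_gt0; rewrite oppr_lt0 divr_gt0 // ltr_wpDl ?sqr_ge0 // exprn_gt0.
Qed.

Definition upper_stable g := forall w, 0 < complex.Im w -> ~~ root g w.

Lemma Im_logderiv_le0 g w : upper_stable g -> 0 < complex.Im w ->
  complex.Im (g^`().[w] / g.[w]) <= 0.
Proof.
move=> + w_gt0; have [n] := ubnP (size g); elim: n g => // n IH g.
rewrite ltnS => size_g g_stable.
have [/size1_polyC -> | size_g_gt1] := leqP (size g) 1.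
  by rewrite derivC horner0 mul0r.
have /closed_rootP[rho root_rho] : size g != 1%N by rewrite gtn_eqF.
have [h gE] := factor_theorem _ _ root_rho.
have h_stable : upper_stable h.
  by move=> u u_gt0; apply: contra (g_stable u u_gt0); rewrite gE rootM => ->.
have h_neq0 : h != 0 by apply: contraTneq size_g_gt1; rewrite gE => ->; rewrite mul0r size_poly0.
have rho_le0 : complex.Im rho <= 0 by rewrite leNgt; apply: contraL root_rho; apply: g_stable.
have w_rho_gt0 : 0 < complex.Im (w - rho) by rewrite raddfB /= subr_gt0 (le_lt_trans rho_le0).
have hw_neq0 : h.[w] != 0 := h_stable w w_gt0.
have w_rho_neq0 : w - rho != 0 by apply: contraTneq w_rho_gt0 => ->; rewrite ltxx.
have -> : g^`().[w] / g.[w] = h^`().[w] / h.[w] + (w - rho)^-1.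
  by rewrite gE derivM derivXsubC mulr1 hornerD !hornerM hornerXsubC; field; exact/andP.
have size_h : (size h < n)%N.
  by apply: leq_trans size_g; rewrite gE size_mul ?polyXsubC_eq0 // size_XsubC addn2.
rewrite raddfD /= -[0]addr0 lerD ?IH //; exact/ltW/Im_inv_lt0.
Qed.

Lemma upper_stable_subZderiv g t : upper_stable g -> complex.Im t < 0 ->
  upper_stable (g - t *: g^`()).
Proof.
move=> g_stable t_lt0 w w_gt0; apply/negP; rewrite rootE !hornerE subr_eq0 => /eqP gw.
have gw_neq0 : g.[w] != 0 := g_stable w w_gt0.
have t_neq0 : t != 0 by apply: contraTneq t_lt0 => ->; rewrite ltxx.
have dgw_neq0 : g^`().[w] != 0 by apply: contraNneq gw_neq0; rewrite gw => ->; rewrite mulr0.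
have := Im_logderiv_le0 _ _ g_stable w_gt0.
have -> : g^`().[w] / g.[w] = - (- t)^-1 by rewrite gw invrN opprK; field; exact/andP.
by rewrite raddfN /= oppr_le0 leNgt Im_inv_lt0 // raddfN /= oppr_gt0.
Qed.

Lemma Im_root_lt0 (b : R) (c t : R[i]) : 0 < b -> b < 1 -> 0 < complex.Im c ->
  b%:C%C * t ^+ 2 + c *+ 2 * t + (c ^+ 2 - 1) = 0 -> complex.Im t < 0.
Proof.
case: c t => x y [m n] b_gt0 b_lt1 /= y_gt0.
rewrite !mulr2n !expr2 => /eqP; rewrite eq_complex /=; simpc => /andP[/eqP eRe /eqP eIm].
rewrite ltNge; apply/negP => n_ge0.
(* [p + i q = b t + c] satisfies [(b t + c)^2 = (1 - b) c^2 + b]. *)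
set p := b * m + x; set q := b * n + y.
have pq2 : p ^+ 2 - q ^+ 2 = (1 - b) * (x ^+ 2 - y ^+ 2) + b.
  by rewrite /p /q -[RHS]addr0 -(mulr0 b) -eRe; ring.
have pq : p * q = (1 - b) * x * y.
  by rewrite /p /q -[RHS]addr0 -(mulr0 (b / 2)) -eIm; field.
have y_le_q : y <= q by rewrite /q; nra.
have y2_le_q2 : y ^+ 2 <= q ^+ 2 by nra.
have p2_le : p ^+ 2 <= (1 - b) ^+ 2 * x ^+ 2.
  rewrite -(ler_pM2r (_ : 0 < q ^+ 2)); last by nra.
  have -> : p ^+ 2 * q ^+ 2 = ((1 - b) * x) ^+ 2 * y ^+ 2 by rewrite -exprMn pq; ring.
  by rewrite [X in X * _]exprMn ler_wpM2l // mulr_ge0 ?sqr_ge0.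
have : (1 - b) ^+ 2 * x ^+ 2 <= (1 - b) * x ^+ 2 by nra.
nra.
Qed.

End UpperStable.

Arguments upper_stable {R}.
Arguments upper_stable_subZderiv {R g t}.
Arguments Im_root_lt0 {R b c t}.

Lemma closed_field_vieta (F : closedFieldType) (s p : F) :
  exists t1 t2 : F, t1 + t2 = s /\ t1 * t2 = p.
Proof.
have /closed_rootP[t1] : size (('X - s%:P) * 'X + p%:P) != 1%N.
  by rewrite size_MXaddC size_XsubC polyXsubC_eq0.
rewrite rootE !hornerE => /eqP root_t1.
exists t1, (s - t1); split; first by rewrite addrC subrK.
by rewrite -[p]subr0 -root_t1; ring.
Qed.

Section TopAtComplexPoint.
Variable R : realType.
Implicit Types (f : {poly R}) (c z : R[i]).

Notation "f ^C" := (map_poly (real_complex R) f) (format "f ^C").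

Lemma upper_stable_map_real f : only_real_zeros f -> upper_stable f^C.
Proof. by move=> f_real w w_gt0; apply: contraL w_gt0 => /f_real ->; rewrite ltxx. Qed.

Lemma root_map_real_conj f z : root f^C z -> root f^C z^*%C.
Proof.
have f_conj : map_poly conjc f^C = f^C.
  by rewrite -map_poly_comp; apply: eq_map_poly => r /=; rewrite oppr0.
by rewrite -complex_root_conj f_conj.
Qed.

(* Vieta: at the point c, b + 2 c D + (c^2 - 1) D^2 = b (1 - t1 D) (1 - t2 D). *)
Lemma horner_map_Top (b : R) f c (t1 t2 : R[i]) :
  c *+ 2 = - (b%:C%C * (t1 + t2)) -> c ^+ 2 - 1 = b%:C%C * (t1 * t2) ->
  let G := f^C - t2 *: f^C^`() in
  (Top b f)^C.[c] = b%:C%C * (G - t1 *: G^`()).[c].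
Proof.
move=> sum prod G; rewrite /G /Top.
rewrite !rmorphD !rmorphM /= !map_polyZ /= rmorphB rmorphXn /= map_polyX rmorph1.
rewrite (rmorph_nat (real_complex R)) -!deriv_map !derivB !derivZ !hornerE.
by rewrite mulr_natl sum prod; ring.
Qed.

Lemma map_Top_no_upper_root (b : R) f c : 0 < b -> b < 1 -> only_real_zeros f ->
  0 < complex.Im c -> ~~ root (Top b f)^C c.
Proof.
move=> b_gt0 b_lt1 f_real c_gt0.
have b_neq0 : b%:C%C != 0 :> R[i] by rewrite fmorph_eq0 gt_eqF.
have [t1 [t2 [sum prod]]] := @closed_field_vieta R[i] (- (c *+ 2) / b%:C%C) ((c ^+ 2 - 1) / b%:C%C).
have {}sum : c *+ 2 = - (b%:C%C * (t1 + t2)) by rewrite sum mulrC divfK ?opprK.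
have {}prod : c ^+ 2 - 1 = b%:C%C * (t1 * t2) by rewrite prod mulrC divfK.
have t1_lt0 : complex.Im t1 < 0.
  by apply: (Im_root_lt0 b_gt0 b_lt1 c_gt0); rewrite sum prod; ring.
have t2_lt0 : complex.Im t2 < 0.
  by apply: (Im_root_lt0 b_gt0 b_lt1 c_gt0); rewrite sum prod; ring.
set G := f^C - t2 *: f^C^`().
have G_stable : upper_stable (G - t1 *: G^`()).
  exact/upper_stable_subZderiv/t1_lt0/upper_stable_subZderiv/t2_lt0/upper_stable_map_real.
rewrite /root (horner_map_Top b f c t1 t2 sum prod) mulf_eq0 negb_or b_neq0.
exact: G_stable c c_gt0.
Qed.

End TopAtComplexPoint.

Arguments map_Top_no_upper_root {R b f c}.

Theorem proposition4p8 (R : realType) (beta : R) :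
  0 < beta -> beta < 1 ->
  forall f : {poly R}, only_real_zeros f -> only_real_zeros (Top beta f).
Proof.
move=> beta_gt0 beta_lt1 f f_real z root_z.
have [z_lt0|z_gt0|//] := ltrgtP (complex.Im z) 0.
  have zJ_gt0 : 0 < complex.Im z^*%C by case: z z_lt0 {root_z} => a b /=; rewrite oppr_gt0.
  case/negP: (map_Top_no_upper_root beta_gt0 beta_lt1 f_real zJ_gt0).
  exact: root_map_real_conj.
by case/negP: (map_Top_no_upper_root beta_gt0 beta_lt1 f_real z_gt0).
Qed.
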